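(* Let $q=3^m$ with $m\ge1$. Then $\#\{x\in\mathbb{F}_q^*:\ x,\,x+1,\,x-1\in C_0\}\le \frac{q+2\sqrt{q}+9}{8}$.
   Context: $C_0$ denotes the set of nonzero squares in $\mathbb{F}_q^*$. *)

From HB Require Import structures.
From mathcomp Require Import all_boot all_order all_algebra all_field.
Set Implicit Arguments. Unset Strict Implicit. Unset Printing Implicit Defensive.
Import Order.TTheory GRing.Theory Num.Theory.
Local Open Scope ring_scope.

Definition C0 (F : finFieldType) : {set F} :=
  [set x : F | (x != 0) && [exists y : F, y ^+ 2 == x]].

Definition triple_sq_set (F : finFieldType) : {set F} :=
  [set x : F | [&& x != 0, x \in C0 F, (x + 1) \in C0 F & (x - 1) \in C0 F]].

From HB Require Import structures.
From mathcomp Require Import all_boot all_order all_algebra all_field.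
From mathcomp Require Import ring zify.
Import Order.TTheory GRing.Theory Num.Theory.
Local Open Scope ring_scope.

(* Let eta be the quadratic character of F, q = #|F| and S = sum_x eta (x^3 - x).
   The product (1 + eta x) (1 + eta (x + 1)) (1 + eta (x - 1)) is 8 on the counted
   set and nonnegative elsewhere; expanding it and using
   sum_x eta (x + b) eta (x + c) = -1 for b <> c gives 8 #|triple_sq_set F| <= q - 3 + S.
   In characteristic 3 the map x |-> x^3 - x is additive with kernel F_3, so its image
   H has index 3 and q + S = 3 n_0, where n_k counts the z with z^2 in the k-th coset
   of H.  Counting the pairs (z, w) with z^2 - w^2 = (z - w) (z + w) in H in two ways
   gives 3 (n_0^2 + n_1^2 + n_2^2) = q^2 + 2 q, and with n_0 + n_1 + n_2 = q this
   yields S^2 + 3 (n_1 - n_2)^2 = 4 q, so S <= 2 sqrt q. *)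

Set Implicit Arguments.
Unset Strict Implicit.
Unset Printing Implicit Defensive.

Lemma card_set_pair (T U : finType) (R : T -> U -> bool) :
  #|[set p : T * U | R p.1 p.2]| = (\sum_x #|[set y | R x y]|)%N.
Proof.
rewrite -sum1dep_card -(pair_big_dep xpredT R (fun _ _ => 1%N)) /=.
by apply: eq_bigr => x _; rewrite sum1dep_card.
Qed.

Lemma sum_card_fiber (T U : finType) (f : T -> U) :
  (\sum_u #|[set x | f x == u]|)%N = #|T|.
Proof.
rewrite -sum1_card (partition_big f xpredT) //=.
by apply: eq_bigr => u _; rewrite sum1dep_card.
Qed.

Lemma sum_card_rel_swap (T U : finType) (R : T -> U -> bool) :
  (\sum_x #|[set y | R x y]| = \sum_y #|[set x | R x y]|)%N.
Proof.
under eq_bigr do rewrite -sum1dep_card.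
under [RHS]eq_bigr do rewrite -sum1dep_card.
exact: (exchange_big_dep xpredT).
Qed.

Lemma card_fiber_pairs (T U : finType) (f : T -> U) :
  #|[set p : T * T | f p.1 == f p.2]| = (\sum_u #|[set x | f x == u]| ^ 2)%N.
Proof.
rewrite (card_set_pair (fun x y => f x == f y)) (partition_big f xpredT) //=.
apply: eq_bigr => u _; rewrite -mulnn -{1}sum1dep_card big_distrl /=.
by apply: eq_big => // x /eqP <-; rewrite mul1n; apply: eq_card => y; rewrite !inE eq_sym.
Qed.

Section QuadraticCharacter.

Variable F : finFieldType.

Lemma C0P (x : F) : reflect (exists2 s, s != 0 & x = s ^+ 2) (x \in C0 F).
Proof.
rewrite inE; apply: (iffP andP) => [[x0 /existsP[s /eqP xE]]|[s s0 ->]].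
  by exists s => //; apply: contraNneq x0 => s0; rewrite -xE s0 expr0n.
by split; [rewrite sqrf_eq0 | apply/existsP; exists s].
Qed.

Lemma sqr_C0 (s : F) : s != 0 -> s ^+ 2 \in C0 F.
Proof. by move=> s0; apply/C0P; exists s. Qed.

Lemma C0_neq0 (x : F) : x \in C0 F -> x != 0.
Proof. by rewrite inE => /andP[]. Qed.

Lemma C0M (x y : F) : x \in C0 F -> y \in C0 F -> x * y \in C0 F.
Proof.
move=> /C0P[s s0 ->] /C0P[t t0 ->].
by rewrite -exprMn sqr_C0 ?mulf_neq0.
Qed.

Lemma C0V (x : F) : x \in C0 F -> x^-1 \in C0 F.
Proof. by move=> /C0P[s s0 ->]; rewrite -exprVn sqr_C0 ?invr_eq0. Qed.

Definition nonsq : {set F} := [set x | (x != 0) && (x \notin C0 F)].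

Definition qchar (x : F) : int :=
  if x == 0 then 0 else if x \in C0 F then 1 else -1.

Lemma qchar0 : qchar 0 = 0.
Proof. by rewrite /qchar eqxx. Qed.

Lemma qchar_C0 (x : F) : x \in C0 F -> qchar x = 1.
Proof. by move=> xC0; rewrite /qchar (negPf (C0_neq0 xC0)) xC0. Qed.

Lemma qchar_sqr (s : F) : s != 0 -> qchar (s ^+ 2) = 1.
Proof. by move=> s0; rewrite qchar_C0 ?sqr_C0. Qed.

Lemma qchar1 : qchar 1 = 1.
Proof. by rewrite -(expr1n F 2) qchar_sqr ?oner_neq0. Qed.

Lemma qchar_ge (x : F) : -1 <= qchar x.
Proof. by rewrite /qchar; case: ifP => _ //; case: ifP. Qed.

Lemma qcharE (x : F) : qchar x = (x \in C0 F)%:Z - (x \in nonsq)%:Z.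
Proof.
rewrite /qchar [x \in nonsq]inE; case: eqVneq => [->|_] /=.
  by rewrite inE eqxx.
by case: (x \in C0 F).
Qed.

Lemma card_pairs_mul_in (H : {set F}) : 0 \in H ->
  #|[set p : F * F | p.1 * p.2 \in H]| = (#|F| + #|F|.-1 * #|H|)%N.
Proof.
move=> H0; have fiber0 : #|[set v : F | 0 * v \in H]| = #|F|.
  by rewrite -cardsT; apply: eq_card => v; rewrite !inE mul0r H0.
have fiberN0 u : u != 0 -> #|[set v | u * v \in H]| = #|H|.
  move=> u0; rewrite -(card_imset H (mulfI (invr_neq0 u0))); apply: eq_card => v.
  rewrite inE; apply/idP/imsetP => [uvH|[w wH ->]]; last by rewrite mulVKf.
  by exists (u * v); rewrite ?mulKf.
rewrite (card_set_pair (fun u v => u * v \in H)) (bigD1 0) //= fiber0.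
rewrite (eq_bigr _ fiberN0) sum_nat_cond_const -(cardsC1 (0 : F)).
by congr (_ + _ * _)%N; apply: eq_card => v; rewrite !inE.
Qed.

Hypothesis two_neq0 : (2 : F) != 0.

Lemma card_sqr_eq (y : F) : #|[set z | z ^+ 2 == y]|%:Z = 1 + qchar y.
Proof.
rewrite /qchar; case: eqVneq => [->|y0].
  suff -> : [set z : F | z ^+ 2 == 0] = [set 0] by rewrite cards1.
  by apply/setP => z; rewrite !inE sqrf_eq0.
case: ifPn => [/C0P[s s0 ->]|ynC0].
  suff -> : [set z | z ^+ 2 == s ^+ 2] = [set s; - s].
    rewrite cards2 -[s]opprK (inj_eq oppr_inj) opprK.
    by rewrite eq_sym -subr_eq0 opprK -mulr2n -mulr_natr mulf_neq0.
  by apply/setP => z; rewrite !inE eqf_sqr.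
suff -> : [set z | z ^+ 2 == y] = set0 by rewrite cards0 addrN.
apply/setP => z; rewrite !inE; apply: contraNF ynC0 => /eqP zy.
by rewrite -zy sqr_C0 // -sqrf_eq0 zy.
Qed.

Lemma sum_qchar : \sum_x qchar x = 0.
Proof.
apply: (@addrI _ #|F|%:Z); rewrite addr0 -{2}(sum_card_fiber (fun z : F => z ^+ 2)).
rewrite -[in LHS]sum1_card -!natz !natr_sum -big_split /=.
by apply: eq_big => // y _; rewrite -card_sqr_eq natz.
Qed.

Lemma card_nonsq : #|nonsq| = #|C0 F|.
Proof.
have sum_mem (A : {set F}) : \sum_x (x \in A)%:Z = #|A|%:Z.
  rewrite -sum1_card -natz natr_sum [RHS]big_mkcond /=.
  by apply: eq_bigr => x _; case: (x \in A).
apply/eqP; rewrite eq_sym -eqz_nat -subr_eq0 -sum_qchar.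
by rewrite (eq_bigr _ (fun x _ => qcharE x)) sumrB !sum_mem.
Qed.

Lemma nonsq_mul (a x : F) : a \in nonsq -> x \in nonsq -> a * x \in C0 F.
Proof.
move=> aN; have a0 : a != 0 by move: aN; rewrite inE => /andP[].
have aC0N : {subset [set a * s | s in C0 F] <= nonsq}.
  move=> _ /imsetP[s sC0 ->]; rewrite inE mulf_neq0 ?(C0_neq0 sC0) //=.
  apply: contraTN aN => asC0; rewrite inE a0 /= negbK.
  by rewrite -(mulfK (C0_neq0 sC0) a) C0M ?C0V.
have /eqP <- : [set a * s | s in C0 F] == nonsq.
  rewrite eqEcard card_imset ?card_nonsq ?leqnn ?andbT; last exact: mulfI.
  exact/subsetP.
case/imsetP=> _ /C0P[s s0 ->] ->.
by rewrite mulrA -expr2 -exprMn sqr_C0 ?mulf_neq0.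
Qed.

Lemma C0_mul (x y : F) : x != 0 -> y != 0 ->
  (x * y \in C0 F) = ((x \in C0 F) == (y \in C0 F)).
Proof.
move=> x0 y0; have nonsqE (z : F) : z != 0 -> (z \in nonsq) = (z \notin C0 F).
  by move=> z0; rewrite inE z0.
case xC0: (x \in C0 F); case yC0: (y \in C0 F) => /=.
- exact: C0M.
- apply: contraFF yC0 => xyC0.
  by rewrite -(mulKf x0 y) C0M ?C0V.
- apply: contraFF xC0 => xyC0.
  by rewrite -(mulfK y0 x) C0M ?C0V.
- by rewrite nonsq_mul ?nonsqE ?xC0 ?yC0.
Qed.

Lemma qcharM (x y : F) : qchar (x * y) = qchar x * qchar y.
Proof.
rewrite /qchar mulf_eq0; case: eqVneq => [_|x0]; first by rewrite mul0r.
case: eqVneq => [_|y0]; first by rewrite mulr0.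
by rewrite C0_mul //; case: (x \in C0 F); case: (y \in C0 F).
Qed.

Lemma sum_qchar_shift_pair (b c : F) : b != c ->
  \sum_x qchar (x + b) * qchar (x + c) = -1.
Proof.
move=> bc; rewrite (reindex_inj (addIr (- b))) /=.
under eq_bigr do rewrite addrNK -addrA.
set a := - b + c; have a0 : a != 0 by rewrite /a addrC subr_eq0 eq_sym.
have termE (x : F) : qchar x * qchar (x + a) = qchar (1 + a * x^-1) - (x == 0)%:Z.
  have [->|x0] := eqVneq x 0; first by rewrite qchar0 mul0r invr0 mulr0 addr0 qchar1 subrr.
  rewrite -qcharM.
  have -> : x * (x + a) = x ^+ 2 * (1 + a * x^-1) by field.
  by rewrite qcharM qchar_sqr // mul1r subr0.
have invI : injective (fun x : F => 1 + a * x^-1).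
  by move=> x y /addrI /(mulfI a0) /invr_inj.
have sum_invE : \sum_x qchar (1 + a * x^-1) = \sum_x qchar x.
  by rewrite [RHS](reindex_inj invI).
rewrite (eq_bigr _ (fun x _ => termE x)) sumrB sum_invE sum_qchar sub0r.
by rewrite (bigD1 0) //= eqxx big1 ?addr0 // => x /negPf->.
Qed.

Lemma sum_qchar_shift (c : F) : \sum_x qchar (x + c) = 0.
Proof. by rewrite -[RHS]sum_qchar [RHS](reindex_inj (addIr c)). Qed.

Lemma sum_qchar_triple :
  \sum_x (1 + qchar x) * (1 + qchar (x + 1)) * (1 + qchar (x - 1))
    = #|F|%:Z - 3 + \sum_x qchar (x ^+ 3 - x).
Proof.
have termE (x : F) : (1 + qchar x) * (1 + qchar (x + 1)) * (1 + qchar (x - 1)) =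
    1 + (qchar (x + 0) + qchar (x + 1) + qchar (x - 1))
      + (qchar (x + 0) * qchar (x + 1) + qchar (x + 0) * qchar (x - 1)
         + qchar (x + 1) * qchar (x - 1))
      + qchar (x ^+ 3 - x).
  have -> : x ^+ 3 - x = x * (x + 1) * (x - 1) by ring.
  by rewrite addr0 !qcharM; ring.
have one_neqN1 : (1 : F) != -1.
  by rewrite -subr_eq0 opprK -mulr2n.
rewrite (eq_bigr _ (fun x _ => termE x)) !big_split /= !sum_qchar_shift.
rewrite !sum_qchar_shift_pair ?one_neqN1 ?(eq_sym 0) ?oppr_eq0 ?oner_eq0 //.
by rewrite sumr_const; ring.
Qed.

Lemma card_triple_sq_set_le :
  (8 * #|triple_sq_set F|)%:Z <= #|F|%:Z - 3 + \sum_x qchar (x ^+ 3 - x).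
Proof.
rewrite -sum_qchar_triple PoszM -sum1_card -[Posz (\sum_(_ in _) _)]natz natr_sum.
rewrite mulr_sumr big_mkcond /=.
apply: ler_sum => x _; rewrite inE.
case: and4P => [[_ xC0 x1C0 xN1C0]|_]; first by rewrite !qchar_C0.
by rewrite !mulr_ge0 // -lerBlDl sub0r qchar_ge.
Qed.

Lemma card_pairs_sqrB_in (H : {set F}) : 0 \in H ->
  #|[set p : F * F | p.1 ^+ 2 - p.2 ^+ 2 \in H]| = (#|F| + #|F|.-1 * #|H|)%N.
Proof.
move=> H0; rewrite -card_pairs_mul_in //.
have g_inj : injective (fun p : F * F => (p.1 - p.2, p.1 + p.2)).
  move=> [z w] [z' w'] /= [e1 e2].
  have sumE (a b : F) : a * 2 = (a - b) + (a + b) by ring.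
  have /(mulIf two_neq0) zz' : z * 2 = z' * 2 by rewrite (sumE z w) (sumE z' w') e1 e2.
  by rewrite -zz' in e2 *; rewrite (addrI _ e2).
rewrite -[RHS](card_preimset _ g_inj); apply: eq_card => p.
by rewrite !inE subr_sqr.
Qed.

End QuadraticCharacter.

Lemma sqr_3mulB_le (n : 'I_3 -> nat) (q : nat) : (\sum_k n k = q)%N ->
  (3 * \sum_k n k ^ 2 = q ^ 2 + 2 * q)%N ->
  ((3 * n ord0)%:Z - q%:Z) ^+ 2 <= 4 * q%:Z.
Proof.
rewrite !big_ord_recl !big_ord0 !addn0.
move: (n ord0) (n (lift ord0 ord0)) (n (lift ord0 (lift ord0 ord0))) => a b c qE sqrE.
have <- : ((3 * a)%:Z - q%:Z) ^+ 2 + 3 * (b%:Z - c%:Z) ^+ 2 = 4 * q%:Z by nia.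
by rewrite lerDl mulr_ge0 ?sqr_ge0.
Qed.

Section ArtinSchreier.

Variable F : finFieldType.
Hypothesis F_char3 : 3 \in [pchar F].

Lemma two_neq0_char3 : (2 : F) != 0.
Proof.
have -> : (2 : F) = 3%:R - 1 by rewrite -[3%N]/(2 + 1)%N natrD addrK.
by rewrite (pcharf0 F_char3) sub0r oppr_eq0 oner_eq0.
Qed.

Definition as3 (x : F) : F := x ^+ 3 - x.

Definition As3 : {set F} := [set as3 x | x : F].

Lemma as3B (x y : F) : as3 (x - y) = as3 x - as3 y.
Proof.
rewrite /as3 -!(pFrobenius_autE F_char3) rmorphB /=; ring.
Qed.

Lemma as3_eq0 (x : F) : (as3 x == 0) = (x \in [:: 0; 1; -1]).
Proof.
have -> : as3 x = x * (x - 1) * (x + 1) by rewrite /as3; ring.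
by rewrite !mulf_eq0 subr_eq0 addr_eq0 !inE orbA.
Qed.

Lemma card_as3_fiber (y : F) : #|[set x | as3 x == y]| = (3 * (y \in As3))%N.
Proof.
have [/imsetP[x0 _ ->]|yA] := boolP (y \in As3); last first.
  apply/eqP; rewrite muln0 cards_eq0; apply/eqP/setP => x; rewrite !inE.
  by apply: contraNF yA => /eqP <-; rewrite imset_f.
have -> : [set x | as3 x == as3 x0] = [set x + x0 | x in [:: 0; 1; -1]].
  apply/setP => x; rewrite inE -subr_eq0 -as3B as3_eq0.
  apply/idP/imsetP => [xK|[t tK ->]]; last by rewrite addrK.
  by exists (x - x0); rewrite ?subrK.
rewrite card_imset; last exact: addIr.
apply/card_uniqP; rewrite /= !inE negb_or !(eq_sym 0) oppr_eq0 oner_eq0 /= andbT.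
by rewrite -subr_eq0 opprK -mulr2n two_neq0_char3.
Qed.

Lemma card_As3 : (3 * #|As3| = #|F|)%N.
Proof.
rewrite -(sum_card_fiber as3); under eq_bigr do rewrite card_as3_fiber.
by rewrite -big_distrr /= -sum1_card big_mkcond.
Qed.

Lemma As3_0 : 0 \in As3.
Proof. by apply/imsetP; exists 0; rewrite // /as3 expr0n subrr. Qed.

Lemma As3B (y z : F) : y \in As3 -> z \in As3 -> y - z \in As3.
Proof. by move=> /imsetP[x _ ->] /imsetP[x' _ ->]; rewrite -as3B imset_f. Qed.

Lemma As3N (y : F) : (- y \in As3) = (y \in As3).
Proof.
suff As3N_imp (z : F) : z \in As3 -> - z \in As3.
  by apply/idP/idP => /As3N_imp //; rewrite opprK.
by move=> zA; rewrite -sub0r As3B ?As3_0.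
Qed.

Lemma As3_addl (h y : F) : h \in As3 -> (h + y \in As3) = (y \in As3).
Proof.
move=> hA; apply/idP/idP => [hyA|yA]; first by rewrite -(addKr h y) addrC As3B.
by rewrite -[y]opprK As3B ?As3N.
Qed.

Lemma exists_notin_As3 : exists a, a \notin As3.
Proof.
have [a aA | allA] := pickP (fun a => a \notin As3); first by exists a.
have : (#|As3| < #|F|)%N.
  by rewrite -card_As3 ltn_Pmull // card_gt0; apply/set0Pn; exists 0; exact: As3_0.
by rewrite (@eq_card _ _ F) ?ltnn // => y; move/negbFE: (allA y).
Qed.

Section Cosets.

Variable a : F.
Hypothesis aA : a \notin As3.

Lemma As3_mulrnB (k k' : 'I_3) : (a *+ k - a *+ k' \in As3) = (k == k').
Proof.
have a2 : a *+ 2 = - a.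
  by apply/eqP; rewrite -addr_eq0 -mulrSr -mulr_natr (pcharf0 F_char3) mulr0.
have aaE : a + a = - a by rewrite -mulr2n.
case: k k' => [[|[|[|//]]] ?] [[|[|[|//]]] ?];
  rewrite /= ?mulr0n ?mulr1n ?a2 ?subrr ?sub0r ?subr0 ?opprK -?opprD ?aaE ?opprK;
  by rewrite ?As3_0 ?As3N ?(negPf aA).
Qed.

Lemma As3_coset_cover (y : F) : exists k : 'I_3, y - a *+ k \in As3.
Proof.
pose g (p : 'I_3 * F) := p.2 + a *+ p.1.
have g_inj : {in setX [set: 'I_3] As3 &, injective g}.
  move=> [k h] [k' h'] /setXP[_ hA] /setXP[_ h'A]; rewrite /g /= => e.
  have /eqP kk' : k == k'.
    have -> : k == k' = (a *+ k - a *+ k' \in As3) by rewrite As3_mulrnB.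
    have -> : a *+ k - a *+ k' = h' - h by apply: (addrI h); rewrite addrA e addrK addrC subrK.
    exact: As3B.
  by move: e; rewrite -kk' => /addIr ->.
have /setP/(_ y) : g @: setX [set: 'I_3] As3 = [set: F].
  apply/eqP; rewrite eqEcard subsetT cardsT card_in_imset //.
  by rewrite /= cardsX cardsT card_ord card_As3.
rewrite inE => /imsetP[[k h] /setXP[_ hA] ->].
by exists k; rewrite /g addrK.
Qed.

End Cosets.

Lemma As3_index3 :
  exists c : F -> 'I_3, c 0 = ord0 /\ forall y z, (y - z \in As3) = (c y == c z).
Proof.
have [a aA] := exists_notin_As3.
pose c y := xchoose (As3_coset_cover aA y).
have cP y : y - a *+ c y \in As3 := xchooseP (As3_coset_cover aA y).
exists c; split=> [|y z].
  by apply/eqP; rewrite eq_sym -(As3_mulrnB aA) mulr0n; exact: cP.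
have -> : y - z = (y - a *+ c y) - (z - a *+ c z) + (a *+ c y - a *+ c z).
  by move: (a *+ c y) (a *+ c z) => u v; ring.
by rewrite As3_addl ?As3_mulrnB // As3B.
Qed.

Lemma sum_qchar_as3 :
  #|F|%:Z + \sum_x qchar (as3 x) = (3 * #|[set z | z ^+ 2 \in As3]|)%:Z.
Proof.
have -> : #|F|%:Z = \sum_(x : F) 1 by rewrite sumr_const natz.
rewrite -big_split /=.
under eq_bigr do rewrite -card_sqr_eq ?two_neq0_char3 //.
under eq_bigr do rewrite -natz.
rewrite -natr_sum natz; congr Posz.
rewrite sum_card_rel_swap -sum1dep_card big_distrr /=.
rewrite [RHS]big_mkcond; apply: eq_bigr => z _ /=.
have -> : [set x | z ^+ 2 == as3 x] = [set x | as3 x == z ^+ 2].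
  by apply/setP => x; rewrite !inE eq_sym.
by rewrite card_as3_fiber; case: (_ \in As3).
Qed.

Lemma sum_qchar_as3_sqr_le : (\sum_x qchar (as3 x)) ^+ 2 <= 4 * #|F|%:Z.
Proof.
have [c [c0 cE]] := As3_index3.
pose n k := #|[set z : F | c (z ^+ 2) == k]|.
have n0E : #|[set z | z ^+ 2 \in As3]| = n ord0.
  by apply: eq_card => z; rewrite !inE -[z ^+ 2]subr0 cE c0 subr0.
have -> : \sum_x qchar (as3 x) = (3 * n ord0)%:Z - #|F|%:Z.
  by rewrite -n0E -sum_qchar_as3 addrAC subrr add0r.
apply: sqr_3mulB_le; first exact: (sum_card_fiber (fun z : F => c (z ^+ 2))).
rewrite -(card_fiber_pairs (fun z : F => c (z ^+ 2))).
have -> : [set p : F * F | c (p.1 ^+ 2) == c (p.2 ^+ 2)]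
    = [set p | p.1 ^+ 2 - p.2 ^+ 2 \in As3] by apply/setP => p; rewrite !inE cE.
rewrite card_pairs_sqrB_in ?As3_0 ?two_neq0_char3 // -card_As3.
by move: #|As3| => A; nia.
Qed.

End ArtinSchreier.

Lemma ler_2sqrtC_of_sqr (s : int) (q : nat) :
  s ^+ 2 <= 4 * q%:Z -> (s%:~R : algC) <= 2 * sqrtC q%:R.
Proof.
move=> sq_le; have sqrt_ge0 : 0 <= 2 * sqrtC (q%:R : algC) by rewrite mulr_ge0 ?sqrtC_ge0.
have [s_le0|s_gt0] := lerP s 0; first by rewrite (le_trans _ sqrt_ge0) ?lerz0.
rewrite -ler_sqr ?nnegrE ?ler0z ?(ltW s_gt0) // exprMn sqrtCK -rmorphXn /=.
apply: (@le_trans _ _ (4 * q%:Z)%:~R); first by rewrite ler_int.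
by rewrite intrM -!pmulrn -natrX.
Qed.

Theorem lemma5 (F : finFieldType) (m : nat) (hm : (1 <= m)%N)
    (hq : #|F| = (3 ^ m)%N) :
  (#|triple_sq_set F|%:R : algC)
    <= ((3 ^ m)%:R + 2 * sqrtC (3 ^ m)%:R + 9) / 8.
Proof.
have F_char3 : 3 \in [pchar F] by rewrite (card_finPcharP hq).
have S_le := ler_2sqrtC_of_sqr (sum_qchar_as3_sqr_le F_char3).
have T_le : (8 * #|triple_sq_set F|)%:Z <= #|F|%:Z + \sum_(x : F) qchar (as3 x).
  apply: le_trans (card_triple_sq_set_le (two_neq0_char3 F_char3)) _.
  by rewrite lerD2r gerDl oppr_le0.
rewrite -hq ler_pdivlMr ?ltr0n // mulrC; apply: le_trans (_ : _ <= _ + _) _.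
  by move: T_le; rewrite -(ler_int algC) PoszM rmorphM rmorphD /= -!pmulrn; apply.
by rewrite -addrA lerD2l (le_trans S_le) // lerDl ler0n.
Qed.
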